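(* Let $p$ be an odd prime and $G$ a finite non-abelian $2$-generated $p$-group with cyclic $G'$, with parameters $m,n_1,n_2,o_1,o_2,o'_1,o'_2$ as in the context. Then $\min_{\mathrm{lex}}\{(|b_1{\rm C}_G(G')|,|b_2{\rm C}_G(G')|,-|b_1|,-|b_2|):(b_1,b_2)\in\mathcal{B}\}=(p^{o_1},p^{o_2},-p^{n_1+o'_1},-p^{n_2+o'_2})$.
   Context: Conventions: $[x,y]=x^{-1}y^{-1}xy$, $x^y=y^{-1}xy$. Let $|G'|=p^m$, $G/G'\cong C_{p^{n_1}}\times C_{p^{n_2}}$, $n_1\ge n_2\ge1$. A basis is a pair $(b_1,b_2)$ with $G/G'=\langle b_1G'\rangle\times\langle b_2G'\rangle$ and $|b_iG'|=p^{n_i}$; $\mathcal{B}$ is the set of bases. For $g\in G$, $p^{o(g)}=|g{\rm C}_G(G')|$ (order in $G/{\rm C}_G(G')$). $(o_1,o_2)=\min_{\mathrm{lex}}\{(o(b_1),o(b_2)):(b_1,b_2)\in\mathcal{B}\}$; $r_1=1+p^{m-o_1}$; $r_2=1+p^{m-o_2}$ if $o_2>o_1$, else $r_2=r_1^{p^{o_1-o_2}}$. $\mathcal{B}_r$ is the (nonempty) set of bases with $x^{b_i}=x^{r_i}$ for all $x\in G'$, $i=1,2$. For $b\in\mathcal{B}$, $o'_i(b)$ is defined by $|b_i|=p^{n_i+o'_i(b)}$, and $(o'_1,o'_2)=\max_{\mathrm{lex}}\{(o'_1(b),o'_2(b)):b\in\mathcal{B}_r\}$. *)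

From mathcomp Require Import all_boot all_order all_algebra all_fingroup all_solvable.
Set Implicit Arguments. Unset Strict Implicit. Unset Printing Implicit Defensive.
Import GroupScope.

Section Defs.
Variables (gT : finGroupType) (G : {group gT}) (p m n1 n2 : nat).

Definition Gder : {group gT} := (G^`(1))%G.
Definition CGder : {group gT} := ('C_G(G^`(1)))%G.

Definition is_basis (b : gT * gT) : bool :=
  [&& b.1 \in G, b.2 \in G,
      (<[coset Gder b.1]> \x <[coset Gder b.2]>) == (G / Gder),
      #[coset Gder b.1] == (p ^ n1)%N & #[coset Gder b.2] == (p ^ n2)%N].

Definition oC (g : gT) : nat := logn p #[coset CGder g].

(* (o1,o2) = lex-min of (o(b1),o(b2)) over bases (B is nonempty; the
   default value #|gT| of the empty minimum is never used) *)
Definition o1 : nat := \big[minn/#|gT|]_(b | is_basis b) oC b.1.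
Definition o2 : nat :=
  \big[minn/#|gT|]_(b | is_basis b && (oC b.1 == o1)) oC b.2.

Definition r1 : nat := (1 + p ^ (m - o1))%N.
Definition r2 : nat := (if o1 < o2 then 1 + p ^ (m - o2) else r1 ^ (p ^ (o1 - o2)))%N.

Definition in_Br (b : gT * gT) : bool :=
  is_basis b &&
  [forall x in Gder, (x ^ b.1 == x ^+ r1) && (x ^ b.2 == x ^+ r2)].

Definition o'1b (b : gT * gT) : nat := (logn p #[b.1] - n1)%N.
Definition o'2b (b : gT * gT) : nat := (logn p #[b.2] - n2)%N.

Definition o'1 : nat := \max_(b | in_Br b) o'1b b.
Definition o'2 : nat := \max_(b | in_Br b && (o'1b b == o'1)) o'2b b.

End Defs.

Fixpoint lexle (s t : seq int) : bool :=
  match s, t with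
  | x :: s', y :: t' => ((x < y)%R) || ((x == y) && lexle s' t')
  | _, _ => true
  end.

Definition is_lexmin (T : Type) (P : T -> bool) (f : T -> seq int) (v : seq int) : Prop :=
  (exists2 b, P b & f b = v) /\ (forall b, P b -> lexle v (f b)).

(* Conjugation by b in G induces an automorphism of the cyclic p-group G'
   whose order is the order of b modulo C_G(G'); since p is odd, Aut(G') is
   cyclic.  Lifting the exponent shows that x |-> x^(1 + p^a) has order
   p^(m - a), so the power automorphisms x |-> x^(r_i) have orders p^o1 and
   p^o2.  Hence for a basis (b1, b2) with (o(b1), o(b2)) = (o1, o2) there are
   j_i prime to p such that conjugation by b_i^(j_i) is x |-> x^(r_i), and
   (b1^j1, b2^j2) is a basis in B_r with the same element orders.  Among the
   bases minimising the first two coordinates, the pairs (|b1|, |b2|) are thus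
   exactly those realised in B_r, whose lexicographic maximum is
   (p^(n1 + o'1), p^(n2 + o'2)). *)

From Pilot Require Import Defs.
From HB Require Import structures.
From mathcomp Require Import all_boot all_order all_algebra all_fingroup all_solvable.
From mathcomp Require Import zify ring.
Set Implicit Arguments. Unset Strict Implicit. Unset Printing Implicit Defensive.
(* Lets the bigop lemmas for commutative semigroup laws (e.g. bigD1) apply to
   [\big[minn/idx]], which has no neutral element. *)
HB.instance Definition _ := SemiGroup.isComLaw.Build nat minn minnA minnC.

Lemma geq_bigmin_cond (I : finType) (P : pred I) (F : I -> nat) idx i :
  P i -> \big[minn/idx]_(j | P j) F j <= F i.
Proof. by move=> Pi; rewrite (bigD1 i) //= geq_minl. Qed.

Lemma eq_bigmin_cond (I : finType) (P : pred I) (F : I -> nat) idx :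
  (exists i, P i) -> (forall i, P i -> F i <= idx) ->
  exists2 i, P i & \big[minn/idx]_(j | P j) F j = F i.
Proof.
move=> [i0 Pi0] le_idx; have [i Pi minFi] := arg_minnP F Pi0; exists i => //.
apply/eqP; rewrite eqn_leq geq_bigmin_cond //=.
by elim/big_ind: _ => [|x y|j /minFi]; rewrite ?leq_min ?le_idx // => -> ->.
Qed.

Lemma lexle_pexp (p a1 a2 b1 b2 c1 c2 d1 d2 : nat) : 1 < p ->
  a1 <= c1 -> (a1 = c1 -> a2 <= c2) -> (a1 = c1 -> a2 = c2 -> d1 <= b1) ->
  (a1 = c1 -> a2 = c2 -> d1 = b1 -> d2 <= b2) ->
  lexle [:: Posz (p ^ a1); Posz (p ^ a2); (- Posz (p ^ b1))%R; (- Posz (p ^ b2))%R]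
        [:: Posz (p ^ c1); Posz (p ^ c2); (- Posz (p ^ d1))%R; (- Posz (p ^ d2))%R].
Proof.
move=> p_gt1; rewrite /= !ltz_nat !eqz_nat !Num.Theory.ltrN2 !GRing.Theory.eqr_opp.
rewrite !ltz_nat !eqz_nat andbT !ltn_exp2l // !eqn_exp2l //.
case: ltngtP => // <- _ /(_ erefl); case: ltngtP => // <- _ /(_ erefl erefl).
case: ltngtP => // <- _ /(_ erefl erefl erefl).
by rewrite /= orbC leq_eqVlt eq_sym.
Qed.

Section LiftingTheExponent.

Variable p : nat.
Hypotheses (p_pr : prime p) (p_odd : odd p).

Lemma lift_exponent_step b k : 0 < b ->
  exists2 k', k' = k %[mod p] & (1 + k * p ^ b) ^ p = 1 + k' * p ^ b.+1.
Proof.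
move=> b_gt0; have p_gt2 : 2 < p by case: p p_pr p_odd => [|[|[|]]].
set x := k * p ^ b.
have /dvdnP[t tail_eq] :
    p ^ b.+2 %| \sum_(i < p.-1) 'C(p, i.+2) * (1 ^ (p - i.+2) * x ^ i.+2).
  apply: dvdn_sum => -[[|i] _] _ /=; rewrite exp1n mul1n /x expnMn -expnM mulnCA.
    rewrite dvdn_mull // expnS dvdn_mul ?prime_dvd_bin ?dvdn_exp2l //; lia.
  by rewrite dvdn_mull ?dvdn_mull ?dvdn_exp2l //; nia.
exists (k + t * p); first by rewrite -modnDm modnMl addn0 modn_mod.
rewrite expnDn -(prednK (prime_gt0 p_pr)) 2!big_ord_recl /= prednK ?prime_gt0 //.
rewrite [\sum_(i < p.-1) _](_ : _ = t * p ^ b.+2); last exact: tail_eq.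
rewrite /bump /= bin0 bin1 !exp1n expn0 expn1 /x !expnS; ring.
Qed.

Lemma lift_exponent a e : 0 < a ->
  exists2 k, k = 1 %[mod p] & (1 + p ^ a) ^ (p ^ e) = 1 + k * p ^ (a + e).
Proof.
move=> a_gt0; elim: e => [|e [k k1 IHe]].
  by exists 1; rewrite // addn0 expn0 expn1 mul1n.
have [k' k'k step] := lift_exponent_step k (ltn_addr e a_gt0).
by exists k'; [rewrite k'k | rewrite expnSr expnM IHe step addnS].
Qed.

End LiftingTheExponent.

Import GroupScope.

Section ElementPowers.

Variable gT : finGroupType.
Implicit Types (x a t : gT) (p j : nat).

Lemma pelt_coprime_order p x j : p.-elt x -> coprime p j -> coprime #[x] j.
Proof. by move=> /p_natP[[|k] ->] cpj; rewrite ?coprime1n // coprime_pexpl. Qed.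

Lemma order_expg_coprime x j : coprime #[x] j -> #[x ^+ j] = #[x].
Proof. by rewrite orderXgcd => /eqP ->; rewrite divn1. Qed.

Lemma cycle_expg_coprime x j : coprime #[x] j -> <[x ^+ j]> = <[x]>.
Proof. by rewrite -generator_coprime => /eqP. Qed.

Lemma cyclic_pelt_eq_order (A : {group gT}) p a t :
  cyclic A -> a \in A -> t \in A -> p.-elt a -> #[a] = #[t] ->
  exists2 j, coprime p j & a ^+ j = t.
Proof.
move=> cycA Aa At pa oat.
have [j coj ->] : exists2 j, coprime #[a] j & t = a ^+ j.
  have eq_cycle : <[a]> = <[t]>.
    by apply/eqP; rewrite (eq_subG_cyclic cycA) ?cycle_subG // -!orderE oat.
  have /cycleP[j tj] : t \in <[a]> by rewrite eq_cycle cycle_id.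
  by exists j; rewrite // -generator_coprime /generator -tj eq_cycle.
have [[|k] oa] := p_natP pa.
  move/eqP: oa; rewrite order_eq1 => /eqP ->.
  by exists 1%N; rewrite ?coprimen1 // !expg1n.
by exists j; rewrite // -(coprime_pexpl _ _ (ltn0Sn k)) -oa.
Qed.

Lemma conj_aut_Aut (H : {group gT}) b : b \in 'N(H) -> conj_aut H b \in Aut H.
Proof. by move=> nHb; apply: (subsetP (Aut_conj_aut H 'N(H))); apply: mem_morphim. Qed.

Lemma order_coset_subcent (G H : {group gT}) b :
  G \subset 'N(H) -> b \in G -> #[coset 'C_G(H) b] = #[conj_aut H b].
Proof.
move=> nHG Gb; have nHb := subsetP nHG b Gb.
have nCb : b \in 'N('C_G(H)) by apply: (subsetP (subcent_norm G H)); rewrite inE Gb.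
suff dvd_eq k : (#[coset 'C_G(H) b] %| k) = (#[conj_aut H b] %| k).
  by apply/eqP; rewrite eqn_dvd dvd_eq dvdnn -dvd_eq dvdnn.
rewrite !order_dvdn -!morphX //.
have -> : (coset 'C_G(H) (b ^+ k) == 1) = (b ^+ k \in 'C_G(H)).
  by apply/eqP/idP => [/(coset_idr (groupX k nCb)) | /coset_id].
have -> : (conj_aut H (b ^+ k) == 1) = (b ^+ k \in 'C(H)).
  by rewrite -ker_conj_aut; apply/eqP/(kerP _ (groupX k nHb)).
by rewrite inE groupX.
Qed.

End ElementPowers.

Section PowerAutomorphisms.

Variables (gT : finGroupType) (D : {group gT}) (p m : nat).
Hypotheses (p_pr : prime p) (p_odd : odd p) (cycD : cyclic D).
Hypotheses (oD : #|D| = (p ^ m)%N) (m_gt0 : 0 < m).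

Let pD : p.-group D. Proof. by rewrite /pgroup oD pnatX pnat_id. Qed.

Let ntD : D :!=: 1.
Proof. by rewrite -cardG_gt1 oD -{1}(expn0 p) ltn_exp2l ?prime_gt1. Qed.

Lemma power_autX (t : {perm gT}) r k :
  {in D, forall x, t x = x ^+ r} -> {in D, forall x, (t ^+ k) x = x ^+ (r ^ k)}.
Proof.
move=> tr x Dx; rewrite permX; elim: k => [|k IHk]; first by rewrite expg1.
by rewrite iterS IHk tr ?groupX // -expgM expnSr.
Qed.

Lemma power_aut_exists r : coprime p r ->
  exists2 t, t \in Aut D & {in D, forall x, t x = x ^+ r}.
Proof.
move=> cpr.
have [mu [[mu_exp _ [_ im_mu] _ _] _ _]] := cyclic_pgroup_Aut_structure pD cycD ntD.
have : (r%:R : 'Z_#|D|)%R \is a GRing.unit.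
  by rewrite unitZpE ?cardG_gt1 // oD coprime_pexpl.
rewrite -im_mu => /imageP[t At mu_t]; exists t => // x Dx.
by rewrite -mu_exp // -mu_t val_Zp_nat ?cardG_gt1 // expg_mod // expg_cardG.
Qed.

Lemma order_power_aut_dvdn (t : {perm gT}) r k :
  t \in Aut D -> {in D, forall x, t x = x ^+ r} ->
  (#[t] %| k) = (r ^ k == 1 %[mod #|D|]).
Proof.
move=> At tr; have [g defD] := cyclicP cycD; have Dg : g \in D by rewrite defD cycle_id.
rewrite order_dvdn defD -orderE -(eq_expg_mod_order g _ 1) expg1.
apply/eqP/eqP => [tk1 | gk].
  by rewrite -(power_autX _ tr) // tk1 perm1.
apply: (eq_Aut (groupX k At) (group1 _)) => x; rewrite defD perm1.
case/cycleP => i ->; rewrite (power_autX _ tr) ?defD ?groupX ?cycle_id //.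
by rewrite -expgM mulnC expgM gk.
Qed.

Lemma order_power_aut_1_add_pexp (t : {perm gT}) a :
  0 < a <= m -> t \in Aut D -> {in D, forall x, t x = x ^+ (1 + p ^ a)} ->
  #[t] = (p ^ (m - a))%N.
Proof.
case/andP => a_gt0 le_a_m At tr; have ordE k := order_power_aut_dvdn k At tr.
have /dvdn_pfactor[// | d le_d ot] : #[t] %| p ^ (m - a).
  rewrite ordE; have [k _ ->] := lift_exponent p_pr p_odd (m - a) a_gt0.
  by rewrite subnKC // oD addnC modnMDl.
rewrite ot; congr (expn p _); apply/eqP; rewrite eqn_leq le_d leqNgt; apply/negP => lt_d.
have : #[t] %| p ^ (m - a).-1 by rewrite ot dvdn_exp2l //; lia.
rewrite ordE; have [k k1 ->] := lift_exponent p_pr p_odd (m - a).-1 a_gt0.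
rewrite eqn_mod_dvd ?leq_addr // addKn oD (_ : a + (m - a).-1 = m.-1); last lia.
rewrite -{1}(prednK m_gt0) expnS dvdn_pmul2r ?expn_gt0 ?prime_gt0 //.
by rewrite /dvdn k1 modn_small ?prime_gt1.
Qed.

Lemma power_aut_of_order o : o < m ->
  exists2 t, t \in Aut D &
    {in D, forall x, t x = x ^+ (1 + p ^ (m - o))} /\ #[t] = (p ^ o)%N.
Proof.
move=> lt_o_m; have sub_gt0 : 0 < m - o by rewrite subn_gt0.
have : coprime p (1 + p ^ (m - o)).
  rewrite -coprime_modr addnC -(prednK sub_gt0) expnSr modnMDl.
  by rewrite modn_small ?prime_gt1 // coprimen1.
case/power_aut_exists => t At tr; exists t => //; split => //.
rewrite (order_power_aut_1_add_pexp _ At tr) ?subKn ?(ltnW lt_o_m) //.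
by rewrite sub_gt0 leq_subr.
Qed.

Lemma Aut_cyclic_pgroup_cyclic : cyclic (Aut D).
Proof.
have [mu [_ [_ cycF _ _] autD]] := cyclic_pgroup_Aut_structure pD cycD ntD.
case: ifP autD => _; first by move->.
by case=> t [_ _ _]; rewrite p_odd => -[[]].
Qed.

End PowerAutomorphisms.

Section Bases.

Variables (gT : finGroupType) (G : {group gT}) (p m n1 n2 : nat).
Hypotheses (p_pr : prime p) (pG : p.-group G).

Local Notation D := G^`(1).
Local Notation B := (is_basis G p n1 n2).
Local Notation o1 := (o1 G p n1 n2).
Local Notation o2 := (o2 G p n1 n2).
Local Notation o'1 := (o'1 G p m n1 n2).
Local Notation o'2 := (o'2 G p m n1 n2).
Local Notation in_Br := (in_Br G p m n1 n2).

Let nDG b : b \in G -> b \in 'N(D).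
Proof. exact: subsetP (der_norm 1 G) b. Qed.

Lemma is_basis_exists :
  abelian_type (G / D) = [:: (p ^ n1)%N; (p ^ n2)%N] -> exists b, B b.
Proof.
move=> typeGq; have [bs] := abelian_structure (der_abelian 0 G).
rewrite typeGq; case: bs => [|c1 [|c2 []]] // => defGq [oc1 oc2].
rewrite !big_cons big_nil dprodg1 in defGq.
have [_ defGq' _ _] := dprodP defGq.
have /morphimP[x1 _ Gx1 def1] : c1 \in G / D.
  by rewrite -defGq' (subsetP (mulG_subl _ _)) ?cycle_id.
have /morphimP[x2 _ Gx2 def2] : c2 \in G / D.
  by rewrite -defGq' (subsetP (mulG_subr _ _)) ?cycle_id.
exists (x1, x2).
by rewrite /is_basis Gx1 Gx2 -def1 -def2 -oc1 -oc2 defGq !eqxx.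
Qed.

Lemma is_basis_expg b j1 j2 : B b -> coprime p j1 -> coprime p j2 ->
  [/\ B (b.1 ^+ j1, b.2 ^+ j2), #[b.1 ^+ j1] = #[b.1] & #[b.2 ^+ j2] = #[b.2]].
Proof.
case/and5P => Gb1 Gb2 /eqP defGq /eqP ob1 /eqP ob2 co1 co2.
have pq b' : b' \in G -> p.-elt (coset (Gder G) b').
  by move=> Gb'; apply: mem_p_elt (quotient_pgroup _ pG) (mem_quotient _ Gb').
have cq1 := pelt_coprime_order (pq _ Gb1) co1.
have cq2 := pelt_coprime_order (pq _ Gb2) co2.
rewrite !order_expg_coprime ?(pelt_coprime_order (mem_p_elt pG _)) //.
rewrite /is_basis /= !groupX // !morphX ?nDG // !cycle_expg_coprime //.
by rewrite !order_expg_coprime // defGq ob1 ob2 !eqxx.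
Qed.

Lemma order_coset_CGder b : b \in G -> #[coset (CGder G) b] = (p ^ oC G p b)%N.
Proof.
move=> Gb; rewrite /oC -p_part part_pnat_id //.
exact: mem_p_elt (quotient_pgroup _ pG) (mem_quotient _ Gb).
Qed.

Lemma order_conj_aut_der b : b \in G -> #[conj_aut D b] = (p ^ oC G p b)%N.
Proof. by move=> Gb; rewrite -(order_coset_subcent (der_norm 1 G) Gb) order_coset_CGder. Qed.

Lemma order_basis b : B b ->
  #[b.1] = (p ^ (n1 + o'1b p n1 b))%N /\ #[b.2] = (p ^ (n2 + o'2b p n2 b))%N.
Proof.
case/and5P => Gb1 Gb2 _ /eqP ob1 /eqP ob2.
suff order_pexp b' n : b' \in G -> #[coset (Gder G) b'] = (p ^ n)%N ->
    #[b'] = (p ^ (n + (logn p #[b'] - n)))%N by split; apply: order_pexp.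
move=> Gb' obq; have pb' := mem_p_elt pG Gb'.
have le_n : n <= logn p #[b'].
  by rewrite -(@dvdn_Pexp2l p) ?prime_gt1 // -p_part part_pnat_id // -obq morph_order ?nDG.
by rewrite subnKC // -p_part part_pnat_id.
Qed.

Hypotheses (p_odd : odd p) (cycD : cyclic D) (oD : #|D| = (p ^ m)%N) (m_gt0 : 0 < m).

Lemma oC_lt b : b \in G -> oC G p b < m.
Proof.
move=> Gb; have := order_dvdG (conj_aut_Aut (nDG Gb)).
rewrite card_Aut_cyclic // oD totient_pfactor // order_conj_aut_der //.
rewrite Gauss_dvdr ?coprimeXl ?coprimenP ?prime_gt0 // dvdn_Pexp2l ?prime_gt1 //.
by rewrite -ltnS prednK.
Qed.

Lemma oC_conj_power b t r o :
  b \in G -> t \in Aut D -> {in D, forall x, t x = x ^+ r} -> #[t] = (p ^ o)%N ->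
  {in D, forall x, x ^ b = x ^+ r} -> oC G p b = o.
Proof.
move=> Gb At tr ot br; apply/eqP.
rewrite -(eqn_exp2l _ _ (prime_gt1 p_pr)) -order_conj_aut_der // -ot.
suff -> : conj_aut D b = t by [].
apply: (eq_Aut (conj_aut_Aut (nDG Gb)) At) => x Dx.
by rewrite norm_conj_autE ?nDG // br // tr.
Qed.

Hypothesis basis_exists : exists b, B b.

Lemma o1_le b : B b -> o1 <= oC G p b.1.
Proof. exact: geq_bigmin_cond. Qed.

Lemma o2_le b : B b -> oC G p b.1 = o1 -> o2 <= oC G p b.2.
Proof. by move=> Bb e1; apply: geq_bigmin_cond; rewrite Bb e1 eqxx. Qed.

Lemma basis_attaining_o1_o2 : exists2 b, B b & oC G p b.1 = o1 /\ oC G p b.2 = o2.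
Proof.
have le_card b : B b -> oC G p b.1 <= #|gT| /\ oC G p b.2 <= #|gT|.
  case/and5P => Gb1 Gb2 _ _ _; split; rewrite (leq_trans (ltnW (oC_lt _))) //;
  by rewrite (leq_trans (ltnW (ltn_expl m (prime_gt1 p_pr)))) // -oD max_card.
have [b1 Bb1 e1] := eq_bigmin_cond basis_exists (fun b Bb => (le_card b Bb).1).
have Pb1 : B b1 && (oC G p b1.1 == o1) by rewrite Bb1 /Defs.o1 e1 eqxx.
have [b2 /andP[Bb2 /eqP e21] e2] :=
  eq_bigmin_cond (ex_intro _ b1 Pb1) (fun b Pb => (le_card b (proj1 (andP Pb))).2).
by exists b2; rewrite // /Defs.o2 e2.
Qed.

Lemma power_aut_r1 : exists2 t, t \in Aut D &
  {in D, forall x, t x = x ^+ Defs.r1 G p m n1 n2} /\ #[t] = (p ^ o1)%N.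
Proof.
rewrite /Defs.r1; have [b /and5P[Gb1 _ _ _ _] [<- _]] := basis_attaining_o1_o2.
exact: power_aut_of_order (oC_lt Gb1).
Qed.

Lemma power_aut_r2 : exists2 t, t \in Aut D &
  {in D, forall x, t x = x ^+ Defs.r2 G p m n1 n2} /\ #[t] = (p ^ o2)%N.
Proof.
rewrite /Defs.r2; case: ltnP => [_ | le_o2_o1].
  have [b /and5P[_ Gb2 _ _ _] [_ <-]] := basis_attaining_o1_o2.
  exact: power_aut_of_order (oC_lt Gb2).
have [t1 At1 [t1r ot1]] := power_aut_r1.
exists (t1 ^+ (p ^ (o1 - o2))); first exact: groupX.
split; first exact: power_autX.
rewrite orderXdiv ot1 ?dvdn_exp2l ?leq_subr // -{1}(subnK le_o2_o1) expnD.
by rewrite mulKn ?expn_gt0 ?prime_gt0.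
Qed.

Lemma in_Br_oC b : in_Br b -> [/\ B b, oC G p b.1 = o1 & oC G p b.2 = o2].
Proof.
case/andP => Bb /forallP actb; have /and5P[Gb1 Gb2 _ _ _] := Bb.
have [t1 At1 [t1r ot1]] := power_aut_r1; have [t2 At2 [t2r ot2]] := power_aut_r2.
split=> //; [apply: oC_conj_power Gb1 At1 t1r ot1 _ | apply: oC_conj_power Gb2 At2 t2r ot2 _].
  by move=> x Dx; have /andP[/eqP -> _] := implyP (actb x) Dx.
by move=> x Dx; have /andP[_ /eqP ->] := implyP (actb x) Dx.
Qed.

Lemma in_Br_from_basis b : B b -> oC G p b.1 = o1 -> oC G p b.2 = o2 ->
  exists2 b', in_Br b' & o'1b p n1 b' = o'1b p n1 b /\ o'2b p n2 b' = o'2b p n2 b.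
Proof.
move=> Bb e1 e2; have /and5P[Gb1 Gb2 _ _ _] := Bb.
have cycA := Aut_cyclic_pgroup_cyclic p_pr p_odd cycD oD m_gt0.
have conj_power b' t o : b' \in G -> oC G p b' = o -> t \in Aut D -> #[t] = (p ^ o)%N ->
    exists2 j, coprime p j & conj_aut D (b' ^+ j) = t.
  move=> Gb' eo At ot.
  have pb' : p.-elt (conj_aut D b') := morph_p_elt _ (nDG Gb') (mem_p_elt pG Gb').
  have [|j coj ej] := cyclic_pelt_eq_order cycA (conj_aut_Aut (nDG Gb')) At pb'.
    by rewrite order_conj_aut_der // eo ot.
  by exists j; rewrite // morphX ?nDG.
have [t1 At1 [t1r ot1]] := power_aut_r1; have [t2 At2 [t2r ot2]] := power_aut_r2.
have [j1 co1 c1] := conj_power _ _ _ Gb1 e1 At1 ot1.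
have [j2 co2 c2] := conj_power _ _ _ Gb2 e2 At2 ot2.
have [Bb' ob1 ob2] := is_basis_expg Bb co1 co2.
exists (b.1 ^+ j1, b.2 ^+ j2); last by rewrite /o'1b /o'2b /= ob1 ob2.
rewrite /Defs.in_Br Bb'; apply/forallP => x; apply/implyP => Dx.
by rewrite /= -!(@norm_conj_autE _ D) ?groupX ?nDG // c1 c2 t1r // t2r // !eqxx.
Qed.

Lemma o'1_ge b : in_Br b -> o'1b p n1 b <= o'1.
Proof. exact: leq_bigmax_cond. Qed.

Lemma o'2_ge b : in_Br b -> o'1b p n1 b = o'1 -> o'2b p n2 b <= o'2.
Proof. by move=> Brb e1; apply: leq_bigmax_cond; rewrite Brb e1 eqxx. Qed.

Lemma in_Br_attaining_o'1_o'2 : exists2 b, in_Br b & o'1b p n1 b = o'1 /\ o'2b p n2 b = o'2.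
Proof.
have [b0 Bb0 [e1 e2]] := basis_attaining_o1_o2; have [b1 Brb1 _] := in_Br_from_basis Bb0 e1 e2.
pose P b := in_Br b && (o'1b p n1 b == o'1).
pose b2 := [arg max_(b > b1 | in_Br b) o'1b p n1 b].
have Pb2 : P b2.
  rewrite /P /Defs.o'1 (bigmax_eq_arg _ Brb1) eqxx andbT.
  by rewrite /b2; case: (arg_maxnP (o'1b p n1) Brb1).
pose b3 := [arg max_(b > b2 | P b) o'2b p n2 b].
have /andP[Brb3 /eqP e31] : P b3 by rewrite /b3; case: (arg_maxnP (o'2b p n2) Pb2).
by exists b3; rewrite // /Defs.o'2 (bigmax_eq_arg _ Pb2).
Qed.

Lemma is_lexmin_bases :
  is_lexmin B
    (fun b => [:: Posz #[coset (CGder G) b.1]; Posz #[coset (CGder G) b.2];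
                  (- Posz #[b.1])%R; (- Posz #[b.2])%R])
    [:: Posz (p ^ o1)%N; Posz (p ^ o2)%N;
        (- Posz (p ^ (n1 + o'1))%N)%R; (- Posz (p ^ (n2 + o'2))%N)%R].
Proof.
split=> [|b Bb].
  have [b Brb [e1 e2]] := in_Br_attaining_o'1_o'2; have [Bb eo1 eo2] := in_Br_oC Brb.
  have /and5P[Gb1 Gb2 _ _ _] := Bb; have [ob1 ob2] := order_basis Bb.
  by exists b; rewrite //= !order_coset_CGder // eo1 eo2 ob1 ob2 e1 e2.
have /and5P[Gb1 Gb2 _ _ _] := Bb; have [ob1 ob2] := order_basis Bb.
rewrite /= !order_coset_CGder // ob1 ob2; apply: lexle_pexp (prime_gt1 p_pr) _ _ _ _.
- exact: o1_le.
- by move/esym; apply: o2_le.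
- move=> /esym e1 /esym e2; have [b' Brb' [<- _]] := in_Br_from_basis Bb e1 e2.
  by rewrite leq_add2l o'1_ge.
- move=> /esym e1 /esym e2 /addnI eo'1; have [b' Brb' [o'1E <-]] := in_Br_from_basis Bb e1 e2.
  by rewrite leq_add2l o'2_ge // o'1E.
Qed.

End Bases.

Theorem lemma3p4 (p : nat) (gT : finGroupType) (G : {group gT}) (m n1 n2 : nat) :
  prime p -> odd p -> p.-group G -> ~~ abelian G ->
  (exists x y : gT, G :=: <<[set x; y]>>) ->
  cyclic G^`(1) ->
  #|G^`(1)| = (p ^ m)%N ->
  abelian_type (G / G^`(1)) = [:: (p ^ n1)%N; (p ^ n2)%N] ->
  (n2 <= n1)%N -> (1 <= n2)%N ->
  is_lexmin (is_basis G p n1 n2)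
    (fun b => [:: Posz #[coset (CGder G) b.1]; Posz #[coset (CGder G) b.2];
                  (- Posz #[b.1])%R; (- Posz #[b.2])%R])
    [:: Posz (p ^ o1 G p n1 n2)%N; Posz (p ^ o2 G p n1 n2)%N;
        (- Posz (p ^ (n1 + o'1 G p m n1 n2))%N)%R;
        (- Posz (p ^ (n2 + o'2 G p m n1 n2))%N)%R].
Proof.
move=> p_pr p_odd pG nabG _ cycD oD typeGq _ _.
have m_gt0 : 0 < m.
  rewrite -(ltn_exp2l 0 _ (prime_gt1 p_pr)) -oD cardG_gt1.
  by apply: contraNneq nabG => /derG1P.
exact: is_lexmin_bases p_odd cycD oD m_gt0 (is_basis_exists typeGq).
Qed.
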